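(* There is an absolute constant $c$ such that for every connected edge-weighted graph $G$ with diameter $\Delta$ and every $\varepsilon\in(0,1)$, every width-$\varepsilon\Delta$ gridtree hierarchy of $G$ has depth at most $c/\varepsilon$.
   Context: Let $H$ be a connected edge-weighted graph and $w>0$. A $w$-gridtree for $H$ consists of a partition of $V(H)$ into disjoint subsets, each designated either a column or a leftover set, together with a rooted tree $\mathcal{T}$ whose nodes are in one-to-one correspondence with the columns and whose edges are in one-to-one correspondence with the leftover sets, satisfying: (Column adjacency) For every edge $(u,v)$ of $H$: either $u,v$ lie in the same subset, or $u,v$ lie in columns adjacent in $\mathcal{T}$, or one lies in a column $\eta$ and the other in a leftover set whose edge of $\mathcal{T}$ is incident to $\eta$. (Column width) For a column $\eta$, every other column and every edge of $\mathcal{T}$ is either below $\eta$ (in the subtree of $\mathcal{T}$ rooted at $\eta$; for edges, both endpoints in that subtree) or above $\eta$ (otherwise); a vertex is above/below $\eta$ if its column or leftover set is. If $a\in\eta$ is adjacent in $H$ to a vertex above $\eta$, $b$ is a vertex below $\eta$, and $P$ is a path in $H$ from $a$ to $b$, then $P$ has length at least $w$. (Column shortcut) For a column $\eta$, let $H_\eta$ be the subgraph of $H$ induced by $\eta$, all columns below $\eta$, and all leftover sets below $\eta$ or incident to $\eta$. There is a shortest path $\pi_\eta$ of $H_\eta$ such that every vertex of $\eta$ is within distance $2w$ of $\pi_\eta$ in the induced subgraph $H[\eta]$. A width-$w$ gridtree hierarchy $\mathcal{H}$ of $G$ is a rooted tree whose nodes are pairs $\mu=(H^\mu,\mathcal{T}^\mu)$,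 with $H^\mu$ a connected subgraph of $G$ and $\mathcal{T}^\mu$ a $w$-gridtree for $H^\mu$, the root being associated with $G$ itself, such that: (Layer nesting) the children of $\mu$ are in one-to-one correspondence with the connected components of the subgraphs of $H^\mu$ induced by the leftover sets of $\mathcal{T}^\mu$, each child $\mu'$ having $H^{\mu'}$ equal to its component; (Layer width) a vertex $v$ of $H^\mu$ is an outer vertex if it is adjacent in $G$ to a vertex in a column of $\mathcal{T}^{\mathrm{Pa}(\mu)}$, where $\mathrm{Pa}(\mu)$ is the parent (the root has no outer vertices); every vertex $u$ of $H^\mu$ with $\mathrm{dist}_{H^\mu}(u,v)\le w$ for some outer vertex $v$ of $H^\mu$ belongs to a column of $\mathcal{T}^\mu$. The depth of $\mathcal{H}$ is its number of layers (levels of the rooted tree $\mathcal{H}$). *)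

From Stdlib Require Import Reals.
From mathcomp Require Import all_boot.

Set Implicit Arguments.
Unset Strict Implicit.
Unset Printing Implicit Defensive.

Section Graph.
Variables (V : finType) (e : rel V) (wt : V -> V -> R).

(* [u :: p] is a walk inside S: u in S, consecutive vertices adjacent in G,
   all vertices in S.  Since S is used as a vertex set, this is a walk in the
   induced subgraph G[S]. *)
Fixpoint walk_from (S : V -> Prop) (x : V) (p : seq V) : Prop :=
  match p with
  | [::] => True
  | y :: q => e x y /\ S y /\ walk_from S y q
  end.

Definition walk (S : V -> Prop) (u v : V) (p : seq V) : Prop :=
  S u /\ walk_from S u p /\ last u p = v.

Definition wlen (u : V) (p : seq V) : R :=
  foldr Rplus R0 (pairmap wt u p).

Definition is_dist (S : V -> Prop) (u v : V) (d : R) : Prop :=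
  (exists p, walk S u v p /\ wlen u p = d) /\
  (forall p, walk S u v p -> Rle d (wlen u p)).

Definition dist_le (S : V -> Prop) (u v : V) (r : R) : Prop :=
  exists d, is_dist S u v d /\ Rle d r.

Definition connected (S : V -> Prop) : Prop :=
  forall u v, S u -> S v -> exists p, walk S u v p.

Definition mem_set (A : {set V}) : V -> Prop := fun x => x \in A.

Definition diameter (D : R) : Prop :=
  (forall u v : V, dist_le (fun _ => True) u v D) /\
  (exists u v : V, is_dist (fun _ => True) u v D).

Definition is_component (L C : {set V}) : Prop :=
  C != set0 /\ C \subset L /\ connected (mem_set C) /\
  (forall x y, x \in C -> y \in L -> e x y -> y \in C).

(* Columns are the nodes of the rooted tree T (identified with their vertex
   sets); [gt_par] is the parent map (with gt_par root = root); the edge of T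
   from a non-root column xi to its parent is in bijection with the leftover
   set [gt_lft xi]. *)
Record gridtree := Gridtree {
  gt_cols : {set {set V}};
  gt_root : {set V};
  gt_par  : {set V} -> {set V};
  gt_lft  : {set V} -> {set V}
}.

Definition nonroot (T : gridtree) : {set {set V}} :=
  [set eta in gt_cols T | eta != gt_root T].
Definition lefts (T : gridtree) : {set {set V}} := gt_lft T @: nonroot T.
Definition parts (T : gridtree) : {set {set V}} := gt_cols T :|: lefts T.

Definition gt_wf (H : {set V}) (T : gridtree) : Prop :=
  gt_root T \in gt_cols T /\
  gt_par T (gt_root T) = gt_root T /\
  (forall eta, eta \in nonroot T -> gt_par T eta \in gt_cols T) /\
  (forall eta, eta \in gt_cols T -> exists k, iter k (gt_par T) eta = gt_root T) /\
  {in nonroot T &, injective (gt_lft T)} /\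
  [disjoint gt_cols T & lefts T] /\
  partition (parts T) H.

Definition col_below (T : gridtree) (eta xi : {set V}) : Prop :=
  xi \in gt_cols T /\ exists k, iter k (gt_par T) xi = eta.

Definition edge_below (T : gridtree) (eta xi : {set V}) : Prop :=
  xi \in nonroot T /\ col_below T eta xi /\ col_below T eta (gt_par T xi).

Definition vert_below (T : gridtree) (eta : {set V}) (x : V) : Prop :=
  (exists xi, xi != eta /\ col_below T eta xi /\ x \in xi) \/
  (exists xi, edge_below T eta xi /\ x \in gt_lft T xi).

Definition vert_above (T : gridtree) (eta : {set V}) (x : V) : Prop :=
  (exists xi, xi \in gt_cols T /\ xi != eta /\ ~ col_below T eta xi /\ x \in xi) \/
  (exists xi, xi \in nonroot T /\ ~ edge_below T eta xi /\ x \in gt_lft T xi).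

Definition col_adjacency (H : {set V}) (T : gridtree) : Prop :=
  forall u v, u \in H -> v \in H -> e u v ->
    (exists P, P \in parts T /\ u \in P /\ v \in P) \/
    (exists eta xi, eta \in gt_cols T /\ xi \in gt_cols T /\
        ((eta \in nonroot T /\ gt_par T eta = xi) \/
         (xi \in nonroot T /\ gt_par T xi = eta)) /\
        u \in eta /\ v \in xi) \/
    (exists eta xi, eta \in gt_cols T /\ xi \in nonroot T /\
        (xi = eta \/ gt_par T xi = eta) /\
        ((u \in eta /\ v \in gt_lft T xi) \/ (v \in eta /\ u \in gt_lft T xi))).

Definition col_width (H : {set V}) (w : R) (T : gridtree) : Prop :=
  forall eta a b p, eta \in gt_cols T -> a \in eta ->
    (exists y, y \in H /\ e a y /\ vert_above T eta y) ->
    vert_below T eta b ->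
    walk (mem_set H) a b p -> Rle w (wlen a p).

Definition H_sub (T : gridtree) (eta : {set V}) : V -> Prop := fun x =>
  (exists xi, col_below T eta xi /\ x \in xi) \/
  (exists xi, edge_below T eta xi /\ x \in gt_lft T xi) \/
  (exists xi, xi \in nonroot T /\ (xi = eta \/ gt_par T xi = eta) /\
              x \in gt_lft T xi).

Definition shortest_walk (S : V -> Prop) (s : V) (p : seq V) : Prop :=
  walk S s (last s p) p /\
  forall q, walk S s (last s p) q -> Rle (wlen s p) (wlen s q).

Definition col_shortcut (w : R) (T : gridtree) : Prop :=
  forall eta, eta \in gt_cols T ->
    exists s p, shortest_walk (H_sub T eta) s p /\
      forall v, v \in eta ->
        exists x, x \in s :: p /\ dist_le (mem_set eta) v x (Rmult 2 w).

Definition is_gridtree (H : {set V}) (w : R) (T : gridtree) : Prop :=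
  Rlt R0 w /\ gt_wf H T /\ col_adjacency H T /\ col_width H w T /\ col_shortcut w T.

Definition col_union (T : gridtree) : {set V} := \bigcup_(eta in gt_cols T) eta.

Definition leftover_comp (T : gridtree) (C : {set V}) : Prop :=
  exists L, L \in lefts T /\ is_component L C.

(* layer width: pc = union of the columns of the parent's gridtree (set0 for
   the root) *)
Definition layer_width (H : {set V}) (w : R) (T : gridtree) (pc : {set V}) : Prop :=
  forall u v, u \in H -> v \in H ->
    (exists y, y \in pc /\ e v y) ->
    dist_le (mem_set H) u v w ->
    u \in col_union T.

Inductive hier :=
  HNode : {set V} -> gridtree -> seq hier -> hier.

Definition hgraph (h : hier) : {set V} := let: HNode H _ _ := h in H.

Fixpoint hdepth (h : hier) : nat :=
  let: HNode _ _ ch := h in (foldr maxn 0 (map hdepth ch)).+1.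

Inductive valid_hier (w : R) : {set V} -> hier -> Prop :=
| ValidNode (pc H : {set V}) (T : gridtree) (ch : seq hier) :
    connected (mem_set H) ->
    is_gridtree H w T ->
    layer_width H w T pc ->
    uniq (map hgraph ch) ->
    (forall C, C \in map hgraph ch <-> leftover_comp T C) ->
    (forall c, List.In c ch -> valid_hier w (col_union T) c) ->
    valid_hier w pc (HNode H T ch).

Definition gridtree_hierarchy (w : R) (h : hier) : Prop :=
  hgraph h = [set: V] /\ valid_hier w set0 h.

End Graph.

From Stdlib Require Import Reals Lra Classical.
From mathcomp Require Import all_boot.

Set Implicit Arguments.
Unset Strict Implicit.
Unset Printing Implicit Defensive.
Local Open Scope R_scope.

(* Call a vertex x of a layer H "k-deep" (below, [far_from w H pc k x]) if every
   walk inside H from x to a vertex adjacent to the parent's columns pc has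
   length at least k*w.  The heart of the proof is that every node h of a
   width-w hierarchy has a ((depth h) - 1)-deep vertex.  By induction, take
   the deepest child C of h and its deep vertex x.  A walk from x out of the
   leftover component C leaves C through an edge into a column of h
   (column adjacency); the part inside C costs (depth C - 1)*w by induction,
   and the rest costs at least w, since by layer width every vertex within
   distance w of the boundary of h lies in a column, hence not in C.
   At the root, a walk of length at most the diameter D from the deep vertex
   of the deepest child to a root column then gives (depth - 2)*eps*D <= D,
   i.e. depth <= 3/eps. *)

Lemma first_exit (V : finType) (A : {set V}) x p :
  x \in A -> last x p \notin A ->
  exists p1 y p2, p = p1 ++ y :: p2 /\ all (mem A) p1 /\ y \notin A.
Proof.
elim: p x => [|z p IH] x /= hx; first by rewrite hx.
case hz: (z \in A) => hl; last by exists [::], z, p; rewrite hz.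
have [p1 [y [p2 [-> [h1 h2]]]]] := IH _ hz hl.
by exists (z :: p1), y, p2; rewrite /= hz.
Qed.

Lemma last_all_in (V : finType) (A : {set V}) x p :
  x \in A -> all (mem A) p -> last x p \in A.
Proof. by elim: p x => [|y p IH] x //= _ /andP [/IH]. Qed.

Lemma seq_argmin (T : eqType) (P : T -> Prop) (f : T -> R) (Q : seq T) :
  (exists q, q \in Q /\ P q) ->
  exists q, q \in Q /\ P q /\ forall q', q' \in Q -> P q' -> f q <= f q'.
Proof.
elim: Q => [|z Q IH] [q [hq hPq]] //.
have best_z : P z -> (forall q', q' \in Q -> P q' -> f z <= f q') ->
    exists q, q \in z :: Q /\ P q /\ forall q', q' \in z :: Q -> P q' -> f q <= f q'.
  move=> hz hmin; exists z; rewrite mem_head; split=> //; split=> // q'.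
  by rewrite in_cons => /orP [/eqP -> _ | /hmin]; [exact: Rle_refl | ].
case: (classic (exists q, q \in Q /\ P q)) => [/IH [m [hm [hPm hmin]]] | none].
  case: (classic (P z /\ f z <= f m)) => [[hz hzm] | not_z].
    by apply: best_z => // q' /hmin hq' /hq'; lra.
  exists m; rewrite in_cons hm orbT; split=> //; split=> // q'.
  rewrite in_cons => /orP [/eqP -> hz | /hmin //]; apply: Rnot_lt_le => lt; apply: not_z.
  by split=> //; lra.
apply: best_z => [|q' hq' hPq']; last by case: none; exists q'.
by move: hq; rewrite in_cons => /orP [/eqP <- //| hq]; case: none; exists q.
Qed.

Lemma mem_map_In (A : Type) (B : eqType) (f : A -> B) (s : seq A) a :
  List.In a s -> f a \in map f s.
Proof. by elim: s => [|b s IH] //= [-> | /IH]; rewrite in_cons ?eqxx // => ->; rewrite orbT. Qed.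

Section Walks.
Variables (V : finType) (e : rel V) (wt : V -> V -> R).
Hypothesis wt_pos : forall x y, e x y -> 0 < wt x y.

Lemma wlen_cons x y p : wlen wt x (y :: p) = wt x y + wlen wt y p.
Proof. by []. Qed.

Lemma wlen_cat x p1 p2 :
  wlen wt x (p1 ++ p2) = wlen wt x p1 + wlen wt (last x p1) p2.
Proof.
elim: p1 x => [|y p IH] x /=; first by rewrite Rplus_0_l.
by rewrite !wlen_cons IH Rplus_assoc.
Qed.

Lemma walk_from_cat S x p1 p2 :
  walk_from e S x (p1 ++ p2) <-> walk_from e S x p1 /\ walk_from e S (last x p1) p2.
Proof. by elim: p1 x => [|y p IH] x /=; [tauto | rewrite IH; tauto]. Qed.

Lemma wlen_ge0 S x p : walk_from e S x p -> 0 <= wlen wt x p.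
Proof.
elim: p x => [|y p IH] x /= => [_|[exy [_ hw]]]; first exact: Rle_refl.
have := wt_pos exy; have := IH _ hw; rewrite wlen_cons; lra.
Qed.

Lemma wlen_gt0 S a b p : walk e S a b p -> a != b -> 0 < wlen wt a p.
Proof.
case: p => [|y p] [_ [hw hl]] hab; first by rewrite -hl eqxx in hab.
move: hw => /= [eay [_ hw]]; have := wt_pos eay; have := wlen_ge0 hw.
rewrite wlen_cons; lra.
Qed.

Lemma walk_from_mono (S S' : V -> Prop) x p :
  (forall v, S v -> S' v) -> walk_from e S x p -> walk_from e S' x p.
Proof. by move=> hS; elim: p x => [|y p IH] x //= [? [/hS ? /IH ?]]. Qed.

Lemma walk_from_all (S : V -> Prop) (A : {set V}) x p :
  walk_from e S x p -> all (mem A) p -> walk_from e (mem_set A) x p.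
Proof. by elim: p x => [|y p IH] x //= [? [_ /IH hw]] /andP [? /hw]. Qed.

Lemma walk_last_in S a b p : walk e S a b p -> S b.
Proof.
move=> [hSa [hw <-]]; elim: p a hSa hw => [|y p IH] a //= _ [_ [hy hw]].
exact: IH hw.
Qed.

Lemma walk_simplify S a b p :
  walk e S a b p -> exists q, walk e S a b q /\ uniq (a :: q) /\ wlen wt a q <= wlen wt a p.
Proof.
elim: p a => [|c p IH] a [Sa [wp lp]].
  by exists [::]; do !split=> //; exact: Rle_refl.
move: wp => /= [eac [Sc wp]].
have [q [[_ [wq lq]] [uq le_qp]]] := IH c (conj Sc (conj wp lp)).
have le_cons : wlen wt a (c :: q) <= wlen wt a (c :: p) by rewrite !wlen_cons; lra.
case: (boolP (a \in c :: q)) => [aq | a_notin_q].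
- have [s1 [s2 es]] : exists s1 s2, c :: q = s1 ++ a :: s2.
    by case/splitPr: aq => s1 s2; exists s1, s2.
  have wcq : walk_from e S a (c :: q) by [].
  move: wcq uq le_cons; rewrite es walk_from_cat cat_uniq /= => -[w1 [ea [_ w2]]].
  move=> /and4P [_ _ a_notin_s2 us2] le_cons.
  exists s2; split.
    by split=> //; split=> //; rewrite -lq -[last c q]/(last a (c :: q)) es last_cat.
  split; first by rewrite /= a_notin_s2.
  move: le_cons; rewrite wlen_cat.
  have := wlen_ge0 w1; have := wt_pos ea; rewrite wlen_cons; lra.
- exists (c :: q); split; first by split.
  by split; [rewrite /= a_notin_q | lra].
Qed.

Fixpoint seqs_upto (n : nat) : seq (seq V) :=
  if n is n'.+1 then [::] :: [seq x :: q | x <- enum V, q <- seqs_upto n'] else [:: [::]].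

Lemma mem_seqs_upto n q : (size q <= n)%N -> q \in seqs_upto n.
Proof.
elim: n q => [|n IH] [|x q] //= hs.
by rewrite in_cons allpairs_f ?orbT ?mem_enum ?IH.
Qed.

Lemma exists_dist S a b p :
  walk e S a b p -> exists d, is_dist e wt S a b d /\ d <= wlen wt a p.
Proof.
have simple_walk p' : walk e S a b p' -> exists q,
    q \in seqs_upto #|V| /\ walk e S a b q /\ wlen wt a q <= wlen wt a p'.
  move=> /walk_simplify [q [wq [uq le_q]]]; exists q; split=> //.
  apply: mem_seqs_upto; have := max_card (mem (a :: q)).
  by rewrite (card_uniqP uq) /= => /ltnW.
move=> /[dup] hw /simple_walk [q0 [hq0 [wq0 le_q0]]].
have [m [_ [wm hmin]]] := seq_argmin (wlen wt a) (ex_intro _ q0 (conj hq0 wq0)).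
exists (wlen wt a m); split; last by have := hmin _ hq0 wq0; lra.
split; first by exists m.
by move=> p' /simple_walk [q [hq [wq le_q]]]; have := hmin _ hq wq; lra.
Qed.

End Walks.

Section Gridtree.
Variables (V : finType) (e : rel V) (H : {set V}) (T : gridtree V).
Hypothesis T_wf : gt_wf H T.

Lemma parts_partition : partition (parts T) H.
Proof. by case: T_wf => [_ [_ [_ [_ [_ [_ ?]]]]]]. Qed.

Lemma col_parts P : P \in gt_cols T -> P \in parts T.
Proof. by rewrite inE => ->. Qed.

Lemma left_parts P : P \in lefts T -> P \in parts T.
Proof. by rewrite inE => ->; rewrite orbT. Qed.

Lemma part_sub P x : P \in parts T -> x \in P -> x \in H.
Proof.
move=> hP hx; case/and3P: parts_partition => /eqP <- _ _.
by apply/bigcupP; exists P.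
Qed.

Lemma col_union_sub x : x \in col_union T -> x \in H.
Proof. by case/bigcupP => eta /col_parts; exact: part_sub. Qed.

(* The root column is a nonempty block of the partition. *)
Lemma col_union_nonempty : exists z, z \in col_union T.
Proof.
have root_col : gt_root T \in gt_cols T by case: T_wf.
case/and3P: parts_partition => _ _ no_empty.
have /set0Pn [z hz] : gt_root T != set0.
  by apply: contraNneq no_empty => <-; exact: col_parts.
by exists z; apply/bigcupP; exists (gt_root T).
Qed.

Lemma col_left_disjoint eta L y :
  eta \in gt_cols T -> L \in lefts T -> y \in eta -> y \in L -> False.
Proof.
move=> heta hL hy1 hy2.
have disj : [disjoint gt_cols T & lefts T] by case: T_wf => [_ [_ [_ [_ [_ [? _]]]]]].
have neq : eta != L by apply: contraTneq hL => <-; rewrite (disjointFr disj heta).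
case/and3P: parts_partition => _ /trivIsetP triv _.
by move: (triv _ _ (col_parts heta) (left_parts hL) neq) => /disjointFr /(_ hy1); rewrite hy2.
Qed.

Section Component.
Variable C : {set V}.
Hypothesis C_comp : leftover_comp e T C.

Lemma comp_not_col x : x \in C -> x \notin col_union T.
Proof.
case: C_comp => L [hL [_ [hCL _]]] hx; apply/bigcupP => -[eta heta hxe].
exact: col_left_disjoint heta hL hxe (subsetP hCL _ hx).
Qed.

Lemma comp_sub x : x \in C -> x \in H.
Proof. by case: C_comp => L [hL [_ [hCL _]]] /(subsetP hCL); exact: part_sub (left_parts hL). Qed.

Lemma exit_col y z :
  col_adjacency e H T -> y \in C -> z \in H -> e y z -> z \notin C -> z \in col_union T.
Proof.
move=> hadj hy hz eyz hzC.
case: (C_comp) => L [hL [_ [hCL [_ closed]]]].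
have hyL := subsetP hCL _ hy.
case: (hadj _ _ (comp_sub hy) hz eyz) =>
  [[P [hP [hyP hzP]]] | [[eta [_ [heta [_ [_ [hye _]]]]]] |
   [eta [_ [heta [_ [_ [[hye _] | [hze _]]]]]]]]].
- case: (eqVneq P L) => [ePL | neq]; first by rewrite ePL in hzP; rewrite (closed _ _ hy hzP eyz) in hzC.
  case/and3P: parts_partition => _ /trivIsetP triv _.
  by move: (triv _ _ hP (left_parts hL) neq) => /disjointFr /(_ hyP); rewrite hyL.
- by case: (col_left_disjoint heta hL hye hyL).
- by case: (col_left_disjoint heta hL hye hyL).
- by apply/bigcupP; exists eta.
Qed.

Lemma component_exit x u p :
  col_adjacency e H T -> x \in C -> walk e (mem_set H) x u p -> u \notin C ->
  exists p1 y p2, p = p1 ++ y :: p2 /\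
    walk e (mem_set C) x (last x p1) p1 /\ e (last x p1) y /\ y \in col_union T /\
    walk e (mem_set H) (last x p1) u (y :: p2).
Proof.
move=> hadj hx [_ [hw hl]] huC; rewrite -hl in huC.
have [p1 [y [p2 [ep [hin hyC]]]]] := first_exit hx huC.
move: hw hl; rewrite ep walk_from_cat last_cat => -[hw1 hw2] hl.
have hr := last_all_in hx hin.
move: (hw2) => /= [ery [hyH _]].
exists p1, y, p2; split=> //.
split; first by split=> //; split=> //; exact: walk_from_all hw1 hin.
split=> //; split; first exact: exit_col hyH ery hyC.
by split; first exact: comp_sub hr.
Qed.

End Component.
End Gridtree.

Section Hierarchy.
Variables (V : finType) (e : rel V) (wt : V -> V -> R).
Hypothesis wt_pos : forall x y, e x y -> 0 < wt x y.

Lemma near_boundary_in_column w T pc H r u q :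
  layer_width e wt H w T pc -> walk e (mem_set H) r u q ->
  (exists y, y \in pc /\ e u y) -> wlen wt r q <= w -> r \in col_union T.
Proof.
move=> hlw hwalk hadj hle; have [d [hd hdq]] := exists_dist wt_pos hwalk.
case: (hwalk) => hr _.
apply: (hlw r u hr (walk_last_in hwalk) hadj); exists d; split=> //; lra.
Qed.

Definition far_from (w : R) (H pc : {set V}) (k : nat) (x : V) : Prop :=
  x \in H /\ forall u p, walk e (mem_set H) x u p ->
    (exists y, y \in pc /\ e u y) -> INR k * w <= wlen wt x p.

Definition child_depth (ch : seq (hier V)) : nat := foldr maxn 0%N (map (@hdepth V) ch).

Lemma deepest_child ch :
  (0 < child_depth ch)%N -> exists c, List.In c ch /\ hdepth c = child_depth ch.
Proof.
elim: ch => [|c ch IH] //; rewrite /child_depth /= -/(child_depth ch).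
case: (leqP (hdepth c) (child_depth ch)) => _ hpos; last by exists c; split; [left|].
by have [c' [hc' <-]] := IH hpos; exists c'; split; [right|].
Qed.

Lemma deepest_escape w H T ch :
  gt_wf H T -> col_adjacency e H T ->
  (forall C, C \in map (@hgraph V) ch <-> leftover_comp e T C) ->
  (forall c, List.In c ch -> exists x, far_from w (hgraph c) (col_union T) (hdepth c).-1 x) ->
  (0 < child_depth ch)%N ->
  exists C x, leftover_comp e T C /\ x \in C /\
    forall u p, walk e (mem_set H) x u p -> u \notin C ->
      exists r q, r \in C /\ walk e (mem_set H) r u q /\
        INR (child_depth ch).-1 * w + wlen wt r q <= wlen wt x p.
Proof.
move=> hwf hadj hchildren hdeep /deepest_child [c [hc hdc]].
have hC : leftover_comp e T (hgraph c) by apply/hchildren; exact: mem_map_In.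
have [x [hx hfar]] := hdeep c hc; rewrite hdc in hfar.
exists (hgraph c), x; split=> //; split=> // u p hwalk huC.
have [p1 [y [p2 [-> [hw1 [ery [hy hw2]]]]]]] := component_exit hwf hC hadj hx hwalk huC.
exists (last x p1), (y :: p2); split; first exact: walk_last_in hw1.
split=> //; rewrite wlen_cat; apply: Rplus_le_compat_r.
by apply: (hfar _ _ hw1); exists y.
Qed.

Lemma far_point_of_depth w pc0 h :
  valid_hier e wt w pc0 h -> exists x, far_from w (hgraph h) pc0 (hdepth h).-1 x.
Proof.
elim=> pc H T ch _ [w_pos [hwf [hadj _]]] hlw _ hchildren _ IH /=.
rewrite -/(child_depth ch); case: (posnP (child_depth ch)) => [-> | hm].
  have [z hz] := col_union_nonempty hwf.
  exists z; split=> [|u p [_ [hw _]] _]; first exact: col_union_sub hz.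
  by rewrite Rmult_0_l; exact: wlen_ge0 hw.
have [C [x [hC [hx escape]]]] := deepest_escape hwf hadj hchildren IH hm.
exists x; split=> [|u p hwalk hbd]; first exact: (comp_sub hwf hC hx).
have huC : u \notin C.
  have u_col : u \in col_union T.
    have hu : walk e (mem_set H) u u [::] by split; [exact: walk_last_in hwalk |].
    by apply: near_boundary_in_column hlw hu hbd _; rewrite /wlen /=; lra.
  by apply: contraTN u_col => /(comp_not_col hwf hC).
have [r [q [hr [hrq le_len]]]] := escape u p hwalk huC.
have tail_ge_w : w <= wlen wt r q.
  apply: Rnot_lt_le => lt.
  have r_col : r \in col_union T by apply: near_boundary_in_column hlw hrq hbd _; lra.
  by move/negP: (comp_not_col hwf hC hr).
by rewrite -(prednK hm) S_INR; lra.
Qed.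

End Hierarchy.

Lemma depth_arith (m : nat) (eps D : R) :
  0 < eps -> eps < 1 -> 0 < D -> INR m.-1 * (eps * D) <= D -> INR m.+1 <= 3 / eps.
Proof.
move=> he0 he1 hD hle.
apply: (Rmult_le_reg_r eps) => //; rewrite /Rdiv Rmult_assoc Rinv_l; last lra.
have ha : INR m.-1 * eps <= 1 by apply: (Rmult_le_reg_r D) => //; nra.
case: m ha {hle} => [|m] ha; first by rewrite Rmult_1_l; lra.
by move: ha; rewrite !S_INR /=; lra.
Qed.

Theorem lemma5p1 :
  exists c : R,
  forall (V : finType) (e : rel V) (wt : V -> V -> R),
    symmetric e -> irreflexive e ->
    (forall x y, wt x y = wt y x) ->
    (forall x y, e x y -> Rlt R0 (wt x y)) ->
    connected e (fun _ : V => True) ->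
    forall (D eps : R),
      diameter e wt D ->
      Rlt R0 eps -> Rlt eps R1 ->
      forall h : hier V,
        gridtree_hierarchy e wt (Rmult eps D) h ->
        Rle (INR (hdepth h)) (Rdiv c eps).
Proof.
exists 3 => V e wt _ _ _ wt_pos _ D eps [hdiam _] he0 he1 [H T ch] [hH hv].
move: hH => /= hH; subst H.
inversion hv as [pc H' T' ch' _ [_ [hwf [hadj _]]] _ _ hchildren hval]; subst.
change (INR (child_depth ch).+1 <= 3 / eps); case: (posnP (child_depth ch)) => [-> | hm].
  by apply: (depth_arith (D := 1)) => //=; lra.
have hdeep c (hc : List.In c ch) := far_point_of_depth wt_pos (hval c hc).
have [C [x [hC [hx escape]]]] := deepest_escape hwf hadj hchildren hdeep hm.
have [z hz] := col_union_nonempty hwf.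
have [d [[[p [[_ [hw hl]] hlen]] _] hdD]] := hdiam x z.
have hwalk : walk e (mem_set [set: V]) x z p.
  by split; [rewrite /mem_set inE | split=> //; apply: walk_from_mono hw => v; rewrite /mem_set inE].
have hzC : z \notin C by apply: contraTN hz => /(comp_not_col hwf hC).
have [r [q [_ [[_ [hq _]] le_len]]]] := escape z p hwalk hzC.
have hxz : x != z by apply: contraTneq hx => ->.
have hD : 0 < D by have := wlen_gt0 wt_pos hwalk hxz; lra.
apply: (depth_arith (D := D)) => //; have := wlen_ge0 wt_pos hq; lra.
Qed.
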